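(* For every $n\geq 3$ we have $P_h(\ast_n)=\{2,3,4,\ldots\}\cup\{+\infty\}$.
   Context: For $n\geq 3$, the star graph $\ast_n$ is the topological graph with $n+1$ vertices $0,1,\ldots,n$ and $n$ edges $[0,1],[0,2],\ldots,[0,n]$, i.e. the union of $n$ arcs, the $i$-th having end points $0$ and $i$, any two of which meet only at the common end point $0$. For a topological space $A$, $Homeo(A)$ denotes the group of all homeomorphisms $A\to A$ under composition. For a subgroup $G$ of $Homeo(A)$ (acting by $gx=g(x)$), a nonempty subset $Y\subseteq A$ is invariant if $g(y)\in Y$ for all $g\in G$, $y\in Y$. The height of $(G,A)$ is $h(G,A)=\sup\{n\geq 0:$ there exist distinct closed invariant subsets $Y_0\subset Y_1\subset\cdots\subset Y_n=A\}$ (possibly $+\infty$). Finally $P_h(A)=\{h(G,A): G \text{ is a subgroup of } Homeo(A)\}$. *)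

From Stdlib Require Import Reals Lra Lia Arith.
Open Scope R_scope.

(* The star graph *_n, modelled metrically: a point is a pair (i, t) with
   t in (0,1] the position on the i-th edge (i < n, edges numbered 0..n-1,
   the end point of edge i being (i,1)), or the centre (0, 0). *)
Definition star_pt (n : nat) (p : nat * R) : Prop :=
  (fst p = 0%nat /\ snd p = 0) \/ ((fst p < n)%nat /\ 0 < snd p <= 1).

Definition star (n : nat) : Type := { p : nat * R | star_pt n p }.

Definition star_dist {n : nat} (x y : star n) : R :=
  let (i, s) := proj1_sig x in
  let (j, t) := proj1_sig y in
  if Nat.eqb i j then Rabs (s - t) else s + t.

Definition is_open {n : nat} (U : star n -> Prop) : Prop :=
  forall x, U x -> exists e, 0 < e /\ forall y, star_dist x y < e -> U y.

Definition is_closed {n : nat} (Y : star n -> Prop) : Prop :=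
  is_open (fun x => ~ Y x).

Definition is_continuous {n : nat} (f : star n -> star n) : Prop :=
  forall x e, 0 < e -> exists d, 0 < d /\
    forall y, star_dist x y < d -> star_dist (f x) (f y) < e.

Definition is_homeo {n : nat} (f : star n -> star n) : Prop :=
  is_continuous f /\ exists g, is_continuous g /\
    (forall x, g (f x) = x) /\ (forall x, f (g x) = x).

Definition is_subgroup {n : nat} (G : (star n -> star n) -> Prop) : Prop :=
  (forall f, G f -> is_homeo f) /\
  G (fun x => x) /\
  (forall f g, G f -> G g -> G (fun x => f (g x))) /\
  (forall f, G f -> exists g, G g /\ (forall x, g (f x) = x) /\ (forall x, f (g x) = x)).

Definition invariant {n : nat} (G : (star n -> star n) -> Prop) (Y : star n -> Prop) : Prop :=
  (exists y, Y y) /\ forall g y, G g -> Y y -> Y (g y).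

Definition closed_invariant {n : nat} (G : (star n -> star n) -> Prop) (Y : star n -> Prop) : Prop :=
  invariant G Y /\ is_closed Y.

Definition strict_subset {n : nat} (Y Z : star n -> Prop) : Prop :=
  (forall x, Y x -> Z x) /\ exists x, Z x /\ ~ Y x.

Definition has_chain {n : nat} (G : (star n -> star n) -> Prop) (m : nat) : Prop :=
  exists Y : nat -> (star n -> Prop),
    (forall i, (i <= m)%nat -> closed_invariant G (Y i)) /\
    (forall i, (i < m)%nat -> strict_subset (Y i) (Y (S i))) /\
    (forall x, Y m x).

Inductive natinf : Type := Fin (k : nat) | Inf.

Definition height_is {n : nat} (G : (star n -> star n) -> Prop) (h : natinf) : Prop :=
  match h with
  | Fin m => has_chain G m /\ forall k, has_chain G k -> (k <= m)%nat
  | Inf => forall m, exists k, (m <= k)%nat /\ has_chain G k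
  end.

Definition P_h (n : nat) (h : natinf) : Prop :=
  exists G : (star n -> star n) -> Prop, is_subgroup G /\ height_is G h.

(* Two disjoint arcs issuing from a point of an open arm must leave it on
   opposite sides.  Hence three disjoint arcs cannot issue from such a point, nor two from an
   end point; as three arms issue from the centre (n >= 3) and two half-arms from every inner
   point of an arm, every homeomorphism fixes the centre and maps end points to end points.
   So {centre} < {centre, end points} < A is a chain of closed invariant sets for every group
   and heights 0 and 1 never occur, while the trivial group has height +oo.
   For k = 2N + b >= 2 we attach to each radius t in [0,1] a level in {0, ..., k}: the radii
   g/N get level g, each open interval between them gets one level, and when b = 1 the radii
   in (0, 1/N) whose odds t / (1/N - t) are powers of 2 get one extra level.  The levels are
   lower semicontinuous, and the homeomorphisms preserving them (exchange two arms and
   reparametrise the radius by maps rescaling the odds on an interval) act transitively on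
   each level.  Closed invariant sets are then unions of levels, and the sublevel sets give a
   chain of the maximal length k. *)

From Stdlib Require Import Reals Lra Lia ZArith List.
From Stdlib Require Import ClassicalEpsilon ProofIrrelevance.
Open Scope R_scope.

Section StarGeometry.

Variable n : nat.
Implicit Types x y : star n.

Definition rad x : R := snd (proj1_sig x).
Definition arm x : nat := fst (proj1_sig x).

Definition centre : star n := exist _ (0%nat, 0) (or_introl (conj eq_refl eq_refl)).

Lemma rad_range x : 0 <= rad x <= 1.
Proof.
  destruct x as [[i t] Hx]; unfold rad; simpl; destruct Hx as [[_ Ht] | [_ Ht]]; simpl in *; lra.
Qed.

Lemma rad_centre : rad centre = 0.
Proof. reflexivity. Qed.

Lemma arm_lt x : 0 < rad x -> (arm x < n)%nat.
Proof.
  destruct x as [[i t] Hx]; unfold rad, arm; simpl; destruct Hx as [[_ Ht] | [Hi _]];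
    simpl in *; [lra | auto].
Qed.

Lemma star_eq x y : rad x = rad y -> (0 < rad x -> arm x = arm y) -> x = y.
Proof.
  destruct x as [[i s] Hx], y as [[j t] Hy]; unfold rad, arm; simpl; intros <- Harm.
  assert (i = j) as <-.
  { destruct Hx as [[Hi Hs] | [_ Hs]], Hy as [[Hj Ht] | [_ Ht]]; simpl in *; subst; auto;
      try lra; apply Harm; lra. }
  f_equal; apply proof_irrelevance.
Qed.

Lemma rad_eq0 x : rad x = 0 -> x = centre.
Proof. intro H; apply star_eq; rewrite H; [reflexivity | intro; lra]. Qed.

Lemma dist_same_arm x y : arm x = arm y -> star_dist x y = Rabs (rad x - rad y).
Proof.
  unfold star_dist, arm, rad; destruct (proj1_sig x) as [i s], (proj1_sig y) as [j t].
  simpl; intros ->; now rewrite Nat.eqb_refl.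
Qed.

Lemma dist_diff_arm x y : arm x <> arm y -> star_dist x y = rad x + rad y.
Proof.
  unfold star_dist, arm, rad; destruct (proj1_sig x) as [i s], (proj1_sig y) as [j t].
  simpl; intro H; apply Nat.eqb_neq in H; now rewrite H.
Qed.

Lemma rad_lipschitz x y : Rabs (rad x - rad y) <= star_dist x y.
Proof.
  pose proof (rad_range x); pose proof (rad_range y).
  destruct (Nat.eq_dec (arm x) (arm y)).
  - rewrite dist_same_arm by auto; lra.
  - rewrite dist_diff_arm by auto; split_Rabs; lra.
Qed.

Lemma dist_self x : star_dist x x = 0.
Proof. rewrite dist_same_arm by reflexivity; rewrite Rminus_diag; apply Rabs_R0. Qed.

Lemma dist_sym x y : star_dist x y = star_dist y x.
Proof.
  destruct (Nat.eq_dec (arm x) (arm y)).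
  - rewrite !dist_same_arm by auto; apply Rabs_minus_sym.
  - rewrite !dist_diff_arm by auto; lra.
Qed.

Lemma dist_centre y : star_dist centre y = rad y.
Proof.
  pose proof (rad_range y).
  destruct (Nat.eq_dec 0 (arm y)).
  - rewrite dist_same_arm by auto; rewrite rad_centre; split_Rabs; lra.
  - rewrite dist_diff_arm by auto; rewrite rad_centre; lra.
Qed.

Lemma near_same_arm x y : star_dist x y < rad x -> arm y = arm x /\ 0 < rad y.
Proof.
  intro Hd; pose proof (rad_range y).
  destruct (Nat.eq_dec (arm x) (arm y)) as [E | E].
  - split; auto. rewrite dist_same_arm in Hd by auto. split_Rabs; lra.
  - rewrite dist_diff_arm in Hd by auto; lra.
Qed.

(* Junk value: off the star (radius outside (0,1], or radius 0 on an arm other than 0)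
   [point] returns the centre. *)
Definition point (j : nat) (r : R) : star n :=
  match excluded_middle_informative (star_pt n (j, r)) with
  | left H => exist _ (j, r) H
  | right _ => centre
  end.

Lemma point_val j r : (j < n)%nat -> 0 < r <= 1 -> proj1_sig (point j r) = (j, r).
Proof.
  intros Hj Hr; unfold point; destruct excluded_middle_informative as [H | Hnot]; auto.
  exfalso; apply Hnot; right; auto.
Qed.

Lemma point_rad0 j : point j 0 = centre.
Proof. apply rad_eq0; unfold point; now destruct excluded_middle_informative. Qed.

Lemma rad_point j r : (j < n)%nat -> 0 <= r <= 1 -> rad (point j r) = r.
Proof.
  intros Hj Hr; destruct (Req_dec r 0) as [-> | Hr0]; [now rewrite point_rad0 |].
  unfold rad; rewrite point_val by (auto; lra); reflexivity.
Qed.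

Lemma arm_point j r : (j < n)%nat -> 0 < r <= 1 -> arm (point j r) = j.
Proof. intros; unfold arm; rewrite point_val; auto. Qed.

Lemma dist_point j r r' : (j < n)%nat -> 0 <= r <= 1 -> 0 <= r' <= 1 ->
  star_dist (point j r) (point j r') = Rabs (r - r').
Proof.
  intros Hj Hr Hr'.
  destruct (Req_dec r 0) as [-> | H0]; [| destruct (Req_dec r' 0) as [-> | H0']].
  - rewrite point_rad0, dist_centre, rad_point by auto; split_Rabs; lra.
  - rewrite point_rad0, dist_sym, dist_centre, rad_point by auto; split_Rabs; lra.
  - rewrite dist_same_arm, !rad_point by (auto; rewrite !arm_point by (auto; lra); auto).
    reflexivity.
Qed.

Lemma point_arm_rad x : 0 < rad x -> point (arm x) (rad x) = x.
Proof.
  intro H; pose proof (rad_range x); pose proof (arm_lt x H).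
  apply star_eq; rewrite rad_point, ?arm_point; auto; lra.
Qed.

Lemma arm_lt_n x : (0 < n)%nat -> (arm x < n)%nat.
Proof.
  intro Hn; pose proof (rad_range x); destruct (Req_dec (rad x) 0) as [H0 | H0].
  - now rewrite (rad_eq0 x H0).
  - apply arm_lt; lra.
Qed.

Lemma near_eq_of_rad p x y :
  star_dist p x < rad p -> star_dist p y < rad p -> rad x = rad y -> x = y.
Proof.
  intros Hx Hy E; apply star_eq; auto; intros _.
  now rewrite (proj1 (near_same_arm p x Hx)), (proj1 (near_same_arm p y Hy)).
Qed.

(** * Homeomorphisms fix the centre and preserve the end points *)

Definition path_continuous (F : R -> star n) : Prop :=
  forall s e, 0 < e -> exists d, 0 < d /\
    forall s', Rabs (s' - s) < d -> star_dist (F s) (F s') < e.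

Lemma path_continuous_comp (f : star n -> star n) F :
  is_continuous f -> path_continuous F -> path_continuous (fun s => f (F s)).
Proof.
  intros Hf HF s e He; destruct (Hf (F s) e He) as [d1 [Hd1 H1]].
  destruct (HF s d1 Hd1) as [d2 [Hd2 H2]]; exists d2; auto.
Qed.

Definition stays_near (F : R -> star n) (p : star n) (d : R) : Prop :=
  forall s, 0 <= s <= d -> star_dist p (F s) < rad p.

Lemma stays_near_le F p d d' : d' <= d -> stays_near F p d -> stays_near F p d'.
Proof. intros Hd H s Hs; apply H; lra. Qed.

Lemma stays_near_start F : path_continuous F -> 0 < rad (F 0) ->
  exists d, 0 < d /\ stays_near F (F 0) d.
Proof.
  intros HF Hp; destruct (HF 0 _ Hp) as [d [Hd H]].
  exists (d / 2); split; [lra |]; intros s Hs; apply H; split_Rabs; lra.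
Qed.

Lemma reaches_radius F r d : path_continuous F -> 0 <= d ->
  (rad (F 0) < r <= rad (F d) \/ rad (F d) <= r < rad (F 0)) ->
  exists z, 0 < z <= d /\ rad (F z) = r.
Proof.
  intros HF Hd Hr.
  assert (Hc : continuity (fun s => rad (F s) - r)).
  { intros s e He; destruct (HF s e He) as [d' [Hd' H]]; exists d'; split; auto.
    intros s' [_ Hs']; simpl in *; unfold Rdist in *.
    pose proof (rad_lipschitz (F s) (F s')); pose proof (H s' Hs'); split_Rabs; lra. }
  destruct (IVT_cor _ 0 d Hc Hd) as [z [Hz Ez]]; [destruct Hr; nra |].
  exists z; split; [| lra].
  split; [| tauto]; destruct (Req_dec z 0) as [-> | ]; [destruct Hr; lra | lra].
Qed.

(* Two arcs leaving [p] inside the arm of [p] cannot both go up, nor both go down: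
   the one going further would pass through the end point of the other. *)
Lemma opposite_sides F1 F2 p d :
  path_continuous F1 -> path_continuous F2 -> 0 < d -> F1 0 = p -> F2 0 = p ->
  stays_near F1 p d -> stays_near F2 p d ->
  (forall s s', 0 < s <= d -> 0 < s' <= d -> F1 s <> F2 s') ->
  F1 d <> p -> F2 d <> p ->
  (rad (F1 d) - rad p) * (rad (F2 d) - rad p) < 0.
Proof.
  intros HF1 HF2 Hd E1 E2 N1 N2 Disj D1 D2.
  assert (Hp : 0 < rad p) by (pose proof (N1 0 ltac:(lra)) as H; rewrite E1, dist_self in H; lra).
  assert (meet : forall G1 G2, path_continuous G2 -> G2 0 = p ->
            stays_near G1 p d -> stays_near G2 p d ->
            (rad p < rad (G1 d) <= rad (G2 d) \/ rad (G2 d) <= rad (G1 d) < rad p) ->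
            exists z, 0 < z <= d /\ G2 z = G1 d).
  { intros G1 G2 HG2 EG2 NG1 NG2 Hr; rewrite <- EG2 in Hr.
    destruct (reaches_radius G2 (rad (G1 d)) d HG2 ltac:(lra) Hr) as [z [Hz Ez]].
    exists z; split; auto; apply (near_eq_of_rad p); auto; [apply NG2 | apply NG1]; lra. }
  assert (R1 : rad (F1 d) <> rad p)
    by (intro E; apply D1, (near_eq_of_rad p); auto; [apply N1; lra | rewrite dist_self; lra]).
  assert (R2 : rad (F2 d) <> rad p)
    by (intro E; apply D2, (near_eq_of_rad p); auto; [apply N2; lra | rewrite dist_self; lra]).
  apply Rnot_le_lt; intro Same.
  assert (Sides : (rad p < rad (F1 d) /\ rad p < rad (F2 d)) \/
                  (rad (F1 d) < rad p /\ rad (F2 d) < rad p)).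
  { destruct (Rlt_dec (rad p) (rad (F1 d))), (Rlt_dec (rad p) (rad (F2 d))); try nra. }
  destruct (Rle_dec (rad (F1 d)) (rad (F2 d))), Sides as [[] | []].
  - destruct (meet F1 F2) as [z [Hz E]]; [auto .. | left; lra |]; now apply (Disj d z).
  - destruct (meet F2 F1) as [z [Hz E]]; [auto .. | right; lra |]; now apply (Disj z d).
  - destruct (meet F2 F1) as [z [Hz E]]; [auto .. | left; lra |]; now apply (Disj z d).
  - destruct (meet F1 F2) as [z [Hz E]]; [auto .. | right; lra |]; now apply (Disj d z).
Qed.

Lemma common_stays_near (F : nat -> R -> star n) p m :
  (forall j, (j < m)%nat -> path_continuous (F j)) -> (forall j, (j < m)%nat -> F j 0 = p) ->
  0 < rad p -> exists d, 0 < d <= 1 /\ forall j, (j < m)%nat -> stays_near (F j) p d.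
Proof.
  intros HF E Hp; induction m as [| m IH].
  - exists 1; split; [lra | intros j Hj; lia].
  - destruct IH as [d [Hd H]]; [intros; apply HF; lia | intros; apply E; lia |].
    rewrite <- (E m) in Hp by lia.
    destruct (stays_near_start (F m) (HF m ltac:(lia)) Hp) as [d' [Hd' H']].
    rewrite E in H' by lia.
    exists (Rmin d d'); split; [split; [now apply Rmin_glb_lt | pose proof (Rmin_l d d'); lra] |].
    intros j Hj; destruct (Nat.eq_dec j m) as [-> | Hjm].
    + apply (stays_near_le _ _ d'); auto; apply Rmin_r.
    + apply (stays_near_le _ _ d); [apply Rmin_l | apply H; lia].
Qed.

Definition disjoint_arcs (F G : R -> star n) : Prop :=
  forall s s', 0 < s <= 1 -> 0 < s' <= 1 -> F s <> G s'.

Definition avoids (F : R -> star n) (p : star n) : Prop := forall s, 0 < s <= 1 -> F s <> p.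

(* Three pairwise disjoint arcs leaving a point of an open arm would have to leave it to
   pairwise opposite sides. *)
Lemma no_three_arcs (F : nat -> R -> star n) p : 0 < rad p ->
  (forall j, (j < 3)%nat -> path_continuous (F j) /\ F j 0 = p /\ avoids (F j) p) ->
  (forall j k, (j < k < 3)%nat -> disjoint_arcs (F j) (F k)) -> False.
Proof.
  intros Hp HF Disj.
  destruct (common_stays_near F p 3) as [d [Hd Near]]; auto; try (intros j Hj; apply HF; auto).
  assert (Opp : forall j k, (j < k < 3)%nat ->
            (rad (F j d) - rad p) * (rad (F k d) - rad p) < 0).
  { intros j k Hjk; destruct (HF j ltac:(lia)) as [Cj [Ej Aj]], (HF k ltac:(lia)) as [Ck [Ek Ak]].
    apply opposite_sides; try (apply Near; lia); auto; try lra.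
    intros s s' Hs Hs'; apply Disj; auto; lra. }
  pose proof (Opp 0%nat 1%nat ltac:(lia)) as Hxy; pose proof (Opp 1%nat 2%nat ltac:(lia)) as Hyz;
    pose proof (Opp 0%nat 2%nat ltac:(lia)) as Hxz.
  set (x := rad (F 0%nat d) - rad p) in *; set (y := rad (F 1%nat d) - rad p) in *;
    set (z := rad (F 2%nat d) - rad p) in *.
  assert (0 < (x * y) * (y * z)) by nra.
  assert ((x * y) * (y * z) * (x * z) = (x * y * z) * (x * y * z)) by ring.
  nra.
Qed.

(* At an end point there is only one side to leave to. *)
Lemma no_two_arcs_at_end F G x : rad x = 1 ->
  path_continuous F -> path_continuous G -> F 0 = x -> G 0 = x ->
  avoids F x -> avoids G x -> disjoint_arcs F G -> False.
Proof.
  intros Hx CF CG EF EG AF AG Disj.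
  destruct (common_stays_near (fun j => if Nat.eqb j 0 then F else G) x 2) as [d [Hd Near]];
    try lra; try (intros [| [| j]] Hj; simpl; auto; lia).
  pose proof (Near 0%nat ltac:(lia)) as NF; pose proof (Near 1%nat ltac:(lia)) as NG.
  simpl in NF, NG.
  assert (Opp : (rad (F d) - rad x) * (rad (G d) - rad x) < 0).
  { apply opposite_sides; auto; try lra; intros s s' Hs Hs'; apply Disj; lra. }
  pose proof (rad_range (F d)); pose proof (rad_range (G d)); nra.
Qed.

Definition clamp01 (s : R) : R := Rmax 0 (Rmin s 1).

Lemma clamp01_range s : 0 <= clamp01 s <= 1.
Proof. unfold clamp01, Rmax, Rmin; repeat destruct Rle_dec; lra. Qed.

Lemma clamp01_id s : 0 <= s <= 1 -> clamp01 s = s.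
Proof. unfold clamp01, Rmax, Rmin; repeat destruct Rle_dec; lra. Qed.

Lemma clamp01_lipschitz s s' : Rabs (clamp01 s - clamp01 s') <= Rabs (s - s').
Proof. unfold clamp01, Rmax, Rmin; repeat destruct Rle_dec; split_Rabs; lra. Qed.

Definition segment (j : nat) (r0 r1 s : R) : star n := point j (r0 + (r1 - r0) * clamp01 s).

Section Segment.

Variables (j : nat) (r0 r1 : R).
Hypotheses (Hj : (j < n)%nat) (Hr0 : 0 <= r0 <= 1) (Hr1 : 0 <= r1 <= 1).

Lemma segment_radius_range s : 0 <= r0 + (r1 - r0) * clamp01 s <= 1.
Proof. pose proof (clamp01_range s); nra. Qed.

Lemma rad_segment s : 0 <= s <= 1 -> rad (segment j r0 r1 s) = r0 + (r1 - r0) * s.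
Proof.
  intro Hs; unfold segment; rewrite rad_point by (auto; apply segment_radius_range).
  now rewrite clamp01_id.
Qed.

Lemma arm_segment s : 0 <= s <= 1 -> 0 < r0 + (r1 - r0) * s -> arm (segment j r0 r1 s) = j.
Proof.
  intros Hs Hpos; unfold segment; rewrite clamp01_id by auto.
  apply arm_point; auto; rewrite <- (clamp01_id s) at 2 by auto.
  pose proof (segment_radius_range s); rewrite clamp01_id in * by auto; lra.
Qed.

Lemma segment_start : segment j r0 r1 0 = point j r0.
Proof. unfold segment; rewrite clamp01_id by lra; f_equal; ring. Qed.

Lemma segment_continuous : path_continuous (segment j r0 r1).
Proof.
  intros s e He; set (L := Rabs (r1 - r0) + 1).
  assert (HL : 0 < L) by (pose proof (Rabs_pos (r1 - r0)); unfold L; lra).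
  exists (e / L); split; [now apply Rdiv_lt_0_compat |]; intros s' Hs'.
  unfold segment; rewrite dist_point by (auto; apply segment_radius_range).
  replace (r0 + (r1 - r0) * clamp01 s - (r0 + (r1 - r0) * clamp01 s'))
    with ((r1 - r0) * (clamp01 s - clamp01 s')) by ring.
  rewrite Rabs_mult.
  pose proof (clamp01_lipschitz s s'); rewrite Rabs_minus_sym in Hs'.
  assert (Hd : L * Rabs (s - s') < e)
    by (apply (Rmult_lt_compat_l L) in Hs'; auto; unfold Rdiv in Hs';
        rewrite <- Rmult_assoc, (Rmult_comm L e), Rmult_assoc, Rinv_r, Rmult_1_r in Hs'; lra).
  pose proof (Rabs_pos (r1 - r0)); pose proof (Rabs_pos (clamp01 s - clamp01 s')).
  unfold L in *; nra.
Qed.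

End Segment.

Lemma homeo_inj (f : star n -> star n) x y : is_homeo f -> f x = f y -> x = y.
Proof. intros [_ [g [_ [Hgf _]]]] E; now rewrite <- (Hgf x), <- (Hgf y), E. Qed.

Theorem homeo_fixes_centre (f : star n -> star n) : (3 <= n)%nat -> is_homeo f ->
  f centre = centre.
Proof.
  intros Hn Hf; destruct (Req_dec (rad (f centre)) 0) as [H0 | H0]; [now apply rad_eq0 |].
  exfalso; apply (no_three_arcs (fun j s => f (segment j 0 1 s)) (f centre));
    [pose proof (rad_range (f centre)); lra | intros j Hj | intros j k Hjk s s' Hs Hs' E].
  - split; [apply path_continuous_comp; [apply Hf | apply segment_continuous; lia || lra] |].
    rewrite segment_start, point_rad0 by (lia || lra); split; auto.
    intros s Hs E; apply homeo_inj in E; auto.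
    apply (f_equal rad) in E; rewrite rad_segment, rad_centre in E by (lia || lra); lra.
  - apply homeo_inj in E; auto; apply (f_equal arm) in E.
    rewrite !arm_segment in E by (lia || lra); lia.
Qed.

Theorem homeo_preserves_ends (f : star n -> star n) x : (3 <= n)%nat -> is_homeo f ->
  rad x = 1 -> rad (f x) = 1.
Proof.
  intros Hn Hf Hx; pose proof (rad_range (f x)) as Hq.
  destruct (Req_dec (rad (f x)) 0) as [H0 | H0].
  { apply rad_eq0 in H0; rewrite <- (homeo_fixes_centre f Hn Hf) in H0.
    apply homeo_inj in H0; auto; subst x; rewrite rad_centre in Hx; lra. }
  destruct (Req_dec (rad (f x)) 1) as [| H1]; auto; exfalso.
  destruct Hf as [Cf [g [Cg [Hgf Hfg]]]].
  assert (ginj : forall a b, g a = g b -> a = b)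
    by (intros a b E; now rewrite <- (Hfg a), <- (Hfg b), E).
  set (q := f x) in *; set (t := rad q) in *; set (i := arm q).
  assert (Hi : (i < n)%nat) by (apply arm_lt; fold t; lra).
  set (u := Rmin t (1 - t)).
  assert (Hu : 0 < u <= t /\ u <= 1 - t)
    by (unfold u, Rmin; destruct Rle_dec; lra).
  assert (Start : forall r, 0 <= r <= 1 -> g (segment i t r 0) = x).
  { intros r Hr; rewrite segment_start by (auto; lra).
    unfold i, t; rewrite point_arm_rad by (fold t; lra); apply Hgf. }
  assert (Rad : forall r s, 0 <= r <= 1 -> 0 <= s <= 1 -> rad (segment i t r s) = t + (r - t) * s)
    by (intros; apply rad_segment; auto; lra).
  apply (no_two_arcs_at_end (fun s => g (segment i t (t + u) s))
                            (fun s => g (segment i t (t - u) s)) x); auto;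
    try (apply path_continuous_comp; auto; apply segment_continuous; auto; lra).
  - apply Start; lra.
  - apply Start; lra.
  - intros s Hs E; rewrite <- (Hgf x) in E; apply ginj, (f_equal rad) in E.
    rewrite Rad in E by lra; fold q t in E; nra.
  - intros s Hs E; rewrite <- (Hgf x) in E; apply ginj, (f_equal rad) in E.
    rewrite Rad in E by lra; fold q t in E; nra.
  - intros s s' Hs Hs' E; apply ginj, (f_equal rad) in E.
    rewrite !Rad in E by lra; nra.
Qed.

(** * Heights 0 and 1 never occur; the trivial group has infinite height *)

Lemma closed_rad_le c : is_closed (fun x : star n => rad x <= c).
Proof.
  intros x Hx; exists (rad x - c); split; [lra |]; intros y Hy.
  pose proof (rad_lipschitz x y); split_Rabs; lra.
Qed.

Lemma closed_rad_ends : is_closed (fun x : star n => rad x = 0 \/ rad x = 1).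
Proof.
  intros x Hx; pose proof (rad_range x).
  exists (Rmin (rad x) (1 - rad x)); split; [apply Rmin_glb_lt; lra |]; intros y Hy.
  pose proof (rad_lipschitz x y); pose proof (Rmin_l (rad x) (1 - rad x));
    pose proof (Rmin_r (rad x) (1 - rad x)); split_Rabs; lra.
Qed.

Lemma subgroup_chain2 (G : (star n -> star n) -> Prop) : (3 <= n)%nat -> is_subgroup G ->
  has_chain G 2.
Proof.
  intros Hn [HG _].
  exists (fun i x => match i with
                     | 0%nat => rad x <= 0
                     | 1%nat => rad x = 0 \/ rad x = 1
                     | _ => True end).
  assert (Hc : rad centre <= 0) by (rewrite rad_centre; lra).
  assert (Fix : forall g, G g -> g centre = centre) by (intros; apply homeo_fixes_centre; auto).
  assert (Pt : forall r, 0 < r <= 1 -> rad (point 0 r) = r)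
    by (intros; apply rad_point; lia || lra).
  split; [| split].
  - intros [| [| [| i]]] Hi; try lia; (split; [split |]).
    + now exists centre.
    + intros g y Hg Hy; pose proof (rad_range y).
      rewrite (rad_eq0 y), Fix by (auto; lra); auto.
    + apply closed_rad_le.
    + exists centre; now left.
    + intros g y Hg [Hy | Hy]; [left | right].
      * rewrite (rad_eq0 y Hy), Fix, rad_centre; auto.
      * apply homeo_preserves_ends; auto.
    + apply closed_rad_ends.
    + now exists centre.
    + auto.
    + intros x Hx; tauto.
  - intros [| [| i]] Hi; try lia; split.
    + intros x Hx; pose proof (rad_range x); left; lra.
    + exists (point 0 1); rewrite Pt by lra; split; [now right | lra].
    + auto.
    + exists (point 0 (/ 2)); rewrite Pt by lra; split; [auto | lra].
  - auto.
Qed.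

Lemma height_ge2 (G : (star n -> star n) -> Prop) k : (3 <= n)%nat -> is_subgroup G ->
  height_is G (Fin k) -> (2 <= k)%nat.
Proof. intros Hn HG [_ Hmax]; now apply Hmax, subgroup_chain2. Qed.

Definition trivial_group (f : star n -> star n) : Prop := forall x, f x = x.

Lemma is_homeo_id : is_homeo (fun x : star n => x).
Proof.
  assert (C : is_continuous (fun x : star n => x)) by (intros x e He; exists e; auto).
  split; auto; exists (fun x => x); auto.
Qed.

Lemma trivial_subgroup : is_subgroup trivial_group.
Proof.
  unfold trivial_group; split; [| split; [| split]]; auto.
  - intros f Hf; split; [intros x e He; exists e; split; auto; intro y; now rewrite !Hf |].
    exists (fun x => x); split; [intros x e He; now exists e | split; intro; now rewrite Hf].
  - intros f g Hf Hg x; now rewrite Hg, Hf.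
  - intros f Hf; exists (fun x => x); split; [| split]; auto.
Qed.

Lemma trivial_group_chain m : (0 < n)%nat -> has_chain trivial_group (S m).
Proof.
  intro Hn; set (M := INR (S m)); assert (HM : 0 < M) by (apply lt_0_INR; lia).
  assert (Frac : forall i, (i <= S m)%nat -> 0 <= INR i / M <= 1).
  { intros i Hi; assert (0 <= INR i <= M) by (split; [apply pos_INR | now apply le_INR]).
    split; [apply Rmult_le_pos; [lra | left; now apply Rinv_0_lt_compat] |].
    apply (Rmult_le_reg_r M); auto; unfold Rdiv; rewrite Rmult_assoc, Rinv_l; lra. }
  exists (fun i x => rad x <= INR i / M); split; [| split].
  - intros i Hi; split; [split |]; [| intros g y Hg Hy; now rewrite Hg | apply closed_rad_le].
    exists centre; rewrite rad_centre; now apply Frac.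
  - intros i Hi; split.
    + intros x Hx; apply (Rle_trans _ _ _ Hx), Rmult_le_compat_r;
        [left; now apply Rinv_0_lt_compat | apply le_INR; lia].
    + exists (point 0 (INR (S i) / M)).
      assert (0 < INR (S i) / M) by (apply Rdiv_lt_0_compat; auto; apply lt_0_INR; lia).
      rewrite rad_point by (auto; apply Frac; lia); split; [lra |].
      intro Hle; apply Rmult_le_reg_r in Hle;
        [rewrite S_INR in Hle; lra | now apply Rinv_0_lt_compat].
  - intro x; unfold M; rewrite Rdiv_diag by (fold M; lra); apply rad_range.
Qed.

Lemma trivial_group_height : (0 < n)%nat -> height_is trivial_group Inf.
Proof. intros Hn m; exists (S m); split; [lia | now apply trivial_group_chain]. Qed.

(** * Groups preserving a level function *)

Lemma strict_chain_length (A : nat -> nat -> Prop) k m :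
  (exists j, A 0%nat j) -> (forall i j, (i <= m)%nat -> A i j -> (j <= k)%nat) ->
  (forall i, (i < m)%nat ->
     (forall j, A i j -> A (S i) j) /\ exists j, A (S i) j /\ ~ A i j) ->
  (m <= k)%nat.
Proof.
  intros [j0 H0] Hk Hstrict.
  assert (Big : forall i, (i <= m)%nat ->
            exists l, NoDup l /\ length l = S i /\ forall j, In j l -> A i j).
  { induction i as [| i IH]; intro Hi.
    - exists (j0 :: nil); split; [repeat constructor; auto | split; auto].
      intros j [<- | []]; auto.
    - destruct IH as [l [Hl [Hlen Hin]]]; [lia |].
      destruct (Hstrict i ltac:(lia)) as [Hmono [j [Hj Hnew]]].
      exists (j :: l); split; [constructor; auto | split; [simpl; lia |]].
      intros j' [<- | H]; auto. }
  destruct (Big m (le_n m)) as [l [Hl [Hlen Hin]]].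
  assert (Hincl : incl l (seq 0 (S k))).
  { intros j Hj; apply in_seq; specialize (Hk m j (le_n m) (Hin j Hj)); lia. }
  pose proof (NoDup_incl_length Hl Hincl); rewrite length_seq in *; lia.
Qed.

Lemma continuous_comp (f g : star n -> star n) :
  is_continuous f -> is_continuous g -> is_continuous (fun x => f (g x)).
Proof.
  intros Hf Hg x e He; destruct (Hf (g x) e He) as [d1 [Hd1 H1]].
  destruct (Hg x d1 Hd1) as [d2 [Hd2 H2]]; exists d2; auto.
Qed.

Lemma is_homeo_comp (f g : star n -> star n) :
  is_homeo f -> is_homeo g -> is_homeo (fun x => f (g x)).
Proof.
  intros [Cf [f' [Cf' [F1 F2]]]] [Cg [g' [Cg' [G1 G2]]]]; split; [now apply continuous_comp |].
  exists (fun x => g' (f' x)); split; [now apply continuous_comp |].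
  split; intro x; [now rewrite F1, G1 | now rewrite G2, F2].
Qed.

Definition level_preserving (lev : star n -> nat) (f : star n -> star n) : Prop :=
  is_homeo f /\ forall x, lev (f x) = lev x.

Lemma level_preserving_subgroup lev : is_subgroup (level_preserving lev).
Proof.
  split; [| split; [| split]].
  - now intros f [Hf _].
  - split; [apply is_homeo_id | auto].
  - intros f g [Hf Lf] [Hg Lg]; split; [now apply is_homeo_comp | intro x; now rewrite Lf, Lg].
  - intros f [[Cf [g [Cg [E1 E2]]]] Lf]; exists g; repeat split; auto.
    + exists f; auto.
    + intro x; now rewrite <- (Lf (g x)), E2.
Qed.

Section LevelHeight.

Variables (lev : star n -> nat) (k : nat).
Hypothesis lev_le : forall x, (lev x <= k)%nat.
Hypothesis lev_onto : forall j, (j <= k)%nat -> exists x, lev x = j.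
Hypothesis lev_lsc : forall x, exists e, 0 < e /\
  forall y, star_dist x y < e -> (lev x <= lev y)%nat.
Hypothesis lev_transitive : forall x y, lev x = lev y ->
  exists f, level_preserving lev f /\ f x = y.

Lemma sublevel_chain : has_chain (level_preserving lev) k.
Proof.
  exists (fun i x => (lev x <= i)%nat); split; [| split].
  - intros i Hi; split; [split |].
    + destruct (lev_onto 0 ltac:(lia)) as [x Hx]; exists x; lia.
    + intros g y [_ Hg] Hy; now rewrite Hg.
    + intros x Hx; destruct (lev_lsc x) as [e [He H]]; exists e; split; auto.
      intros y Hy Hle; specialize (H y Hy); lia.
  - intros i Hi; split; [intros; lia |].
    destruct (lev_onto (S i) Hi) as [x Hx]; exists x; lia.
  - auto.
Qed.

(* A closed invariant set is a union of level sets, so a strict chain of them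
   strictly increases the set of levels met. *)
Lemma chain_length_le m : has_chain (level_preserving lev) m -> (m <= k)%nat.
Proof.
  intros [Y [HY [Hstrict Hfull]]].
  assert (Sat : forall i x y, (i <= m)%nat -> Y i x -> lev x = lev y -> Y i y).
  { intros i x y Hi Hx E; destruct (lev_transitive x y E) as [f [Hf <-]].
    destruct (HY i Hi) as [[_ Inv] _]; now apply Inv. }
  apply (strict_chain_length (fun i j => exists x, Y i x /\ lev x = j)).
  - destruct (HY 0%nat ltac:(lia)) as [[[x Hx] _] _]; eauto.
  - intros i j _ [x [_ <-]]; auto.
  - intros i Hi; destruct (Hstrict i Hi) as [Hsub [x [Hx Hnot]]]; split.
    + intros j [y [Hy <-]]; eauto.
    + exists (lev x); split; eauto.
      intros [y [Hy E]]; apply Hnot, (Sat i y); auto; lia.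
Qed.

Theorem level_height : height_is (level_preserving lev) (Fin k).
Proof. split; [apply sublevel_chain | apply chain_length_le]. Qed.

End LevelHeight.

(** * Radial homeomorphisms *)

(* No continuity is required: an increasing bijection of [0,1] is continuous
   ([unit_homeo_continuous]). *)
Definition unit_homeo (h h' : R -> R) : Prop :=
  (forall t, 0 <= t <= 1 -> 0 <= h t <= 1) /\ (forall t, 0 <= t <= 1 -> 0 <= h' t <= 1) /\
  (forall t, 0 <= t <= 1 -> h' (h t) = t) /\ (forall t, 0 <= t <= 1 -> h (h' t) = t) /\
  (forall s t, 0 <= s -> s < t -> t <= 1 -> h s < h t).

Section UnitHomeo.

Variables h h' : R -> R.
Hypothesis Hh : unit_homeo h h'.

Lemma unit_homeo_inv_incr s t : 0 <= s -> s < t -> t <= 1 -> h' s < h' t.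
Proof.
  destruct Hh as [R [R' [_ [I' M]]]]; intros Hs Hst Ht.
  destruct (Rlt_le_dec (h' s) (h' t)) as [| Hle]; auto; exfalso.
  destruct Hle as [Hlt | Heq].
  - specialize (M _ _ (proj1 (R' t ltac:(lra))) Hlt (proj2 (R' s ltac:(lra)))).
    rewrite !I' in M; lra.
  - apply (f_equal h) in Heq; rewrite !I' in Heq; lra.
Qed.

Lemma unit_homeo_sym : unit_homeo h' h.
Proof.
  destruct Hh as [R [R' [I [I' _]]]].
  exact (conj R' (conj R (conj I' (conj I unit_homeo_inv_incr)))).
Qed.

Lemma unit_homeo_0 : h 0 = 0.
Proof.
  destruct Hh as [R [R' [_ [I' M]]]].
  destruct (R' 0 ltac:(lra)) as [[Hpos | Hz] _].
  - specialize (M 0 (h' 0) ltac:(lra) Hpos (proj2 (R' 0 ltac:(lra)))).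
    rewrite I' in M; pose proof (R 0 ltac:(lra)); lra.
  - rewrite Hz at 1; apply I'; lra.
Qed.

Lemma unit_homeo_pos t : 0 < t <= 1 -> 0 < h t.
Proof.
  destruct Hh as [_ [_ [_ [_ M]]]]; intro Ht.
  rewrite <- unit_homeo_0; apply M; lra.
Qed.

Lemma unit_homeo_continuous t e : 0 <= t <= 1 -> 0 < e -> exists d, 0 < d /\
  forall s, 0 <= s <= 1 -> Rabs (s - t) < d -> Rabs (h s - h t) < e.
Proof.
  destruct Hh as [R [R' [I [I' M]]]]; intros Ht He.
  assert (Below : exists d, 0 < d /\ forall s, 0 <= s <= 1 -> t - d < s -> h t - e < h s).
  { destruct (Rlt_le_dec (h t - e) 0) as [Hneg | Hnn].
    - exists 1; split; [lra |]; intros s Hs _; pose proof (R s Hs); lra.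
    - pose proof (R t Ht); pose proof (R' (h t - e) ltac:(lra)); set (s1 := h' (h t - e)) in *.
      assert (Hs1 : s1 < t) by (rewrite <- (I t Ht); apply unit_homeo_inv_incr; lra).
      assert (Es1 : h s1 = h t - e) by (apply I'; lra).
      exists (t - s1); split; [lra |]; intros s Hs Hlt; rewrite <- Es1; apply M; fold s1; lra. }
  assert (Above : exists d, 0 < d /\ forall s, 0 <= s <= 1 -> s < t + d -> h s < h t + e).
  { destruct (Rlt_le_dec 1 (h t + e)) as [Hbig | Hsm].
    - exists 1; split; [lra |]; intros s Hs _; pose proof (R s Hs); lra.
    - pose proof (R t Ht); pose proof (R' (h t + e) ltac:(lra)); set (s2 := h' (h t + e)) in *.
      assert (Hs2 : t < s2) by (rewrite <- (I t Ht); apply unit_homeo_inv_incr; lra).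
      assert (Es2 : h s2 = h t + e) by (apply I'; lra).
      exists (s2 - t); split; [lra |]; intros s Hs Hlt; rewrite <- Es2; apply M; fold s2; lra. }
  destruct Below as [d1 [Hd1 B]], Above as [d2 [Hd2 A]].
  exists (Rmin d1 d2); split; [now apply Rmin_glb_lt |]; intros s Hs Hd.
  pose proof (Rmin_l d1 d2); pose proof (Rmin_r d1 d2).
  assert (t - d1 < s < t + d2) by (split_Rabs; lra).
  specialize (B s Hs ltac:(lra)); specialize (A s Hs ltac:(lra)); split_Rabs; lra.
Qed.

End UnitHomeo.

Lemma unit_homeo_id : unit_homeo (fun t => t) (fun t => t).
Proof. repeat split; intros; lra. Qed.

Lemma unit_homeo_comp h1 h1' h2 h2' : unit_homeo h1 h1' -> unit_homeo h2 h2' ->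
  unit_homeo (fun t => h2 (h1 t)) (fun t => h1' (h2' t)).
Proof.
  intros [R1 [R1' [I1 [I1' M1]]]] [R2 [R2' [I2 [I2' M2]]]]; repeat split;
    intros; try apply R2; try apply R1'; try apply R1; try apply R2'; auto.
  - rewrite I2 by (apply R1; lra); auto.
  - rewrite I1' by (apply R2'; lra); auto.
  - apply M2; try apply M1; auto; try apply R1; lra.
Qed.

Definition moves (lam : R -> nat) (s t : R) : Prop :=
  exists h h', unit_homeo h h' /\ (forall u, 0 <= u <= 1 -> lam (h u) = lam u) /\ h s = t.

Lemma moves_refl lam t : moves lam t t.
Proof. exists (fun u => u), (fun u => u); split; [apply unit_homeo_id | auto]. Qed.

Lemma moves_trans lam s t u : moves lam s t -> moves lam t u -> moves lam s u.
Proof.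
  intros [h1 [h1' [H1 [P1 E1]]]] [h2 [h2' [H2 [P2 E2]]]].
  exists (fun v => h2 (h1 v)), (fun v => h1' (h2' v)); split; [now apply unit_homeo_comp |].
  split; [| now rewrite E1].
  intros v Hv; rewrite P2, P1; auto; now apply H1.
Qed.

Definition swap (a b i : nat) : nat :=
  if Nat.eqb i a then b else if Nat.eqb i b then a else i.

Lemma swap_lt a b i : (a < n)%nat -> (b < n)%nat -> (i < n)%nat -> (swap a b i < n)%nat.
Proof. unfold swap; destruct (Nat.eqb_spec i a), (Nat.eqb_spec i b); lia. Qed.

Lemma swap_involutive a b i : swap a b (swap a b i) = i.
Proof.
  unfold swap; destruct (Nat.eqb_spec i a), (Nat.eqb_spec i b);
    repeat match goal with |- context [Nat.eqb ?x ?y] => destruct (Nat.eqb_spec x y) end; lia.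
Qed.

Lemma swap_l a b : swap a b a = b.
Proof. unfold swap; now rewrite Nat.eqb_refl. Qed.

Definition radial (a b : nat) (h : R -> R) (x : star n) : star n :=
  point (swap a b (arm x)) (h (rad x)).

Section Radial.

Variables (a b : nat) (h h' : R -> R).
Hypotheses (Ha : (a < n)%nat) (Hb : (b < n)%nat) (Hh : unit_homeo h h').

Let radius_range x : 0 <= h (rad x) <= 1.
Proof. apply Hh, rad_range. Qed.

Let swapped_arm_lt x : (swap a b (arm x) < n)%nat.
Proof. apply swap_lt, arm_lt_n; auto; lia. Qed.

Lemma rad_radial x : rad (radial a b h x) = h (rad x).
Proof. unfold radial; apply rad_point; [apply swapped_arm_lt | apply radius_range]. Qed.

Lemma arm_radial x : 0 < rad x -> arm (radial a b h x) = swap a b (arm x).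
Proof.
  intro Hx; unfold radial; apply arm_point; [apply swapped_arm_lt |].
  split; [apply (unit_homeo_pos h h'); auto; pose proof (rad_range x); lra | apply radius_range].
Qed.

Lemma radial_continuous : is_continuous (radial a b h).
Proof.
  intros x e He; pose proof (rad_range x) as Hx.
  destruct (unit_homeo_continuous h h' Hh (rad x) e Hx He) as [d [Hd Hc]].
  destruct (Req_dec (rad x) 0) as [H0 | H0].
  - exists d; split; auto; intros y Hy.
    assert (Ex : radial a b h x = centre)
      by (apply rad_eq0; rewrite rad_radial, H0; now apply (unit_homeo_0 h h')).
    rewrite (rad_eq0 x H0), dist_centre in Hy; rewrite Ex, dist_centre, rad_radial.
    specialize (Hc (rad y) (rad_range y)).
    rewrite H0, (unit_homeo_0 h h'), !Rminus_0_r in Hc by auto.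
    pose proof (rad_range y); pose proof (radius_range y); specialize (Hc ltac:(split_Rabs; lra)).
    split_Rabs; lra.
  - exists (Rmin d (rad x)); split; [apply Rmin_glb_lt; lra |]; intros y Hy.
    pose proof (Rmin_l d (rad x)); pose proof (Rmin_r d (rad x)).
    destruct (near_same_arm x y) as [Harm Hy0]; [lra |].
    unfold radial; rewrite Harm, dist_point by auto.
    rewrite Rabs_minus_sym; apply Hc; [apply rad_range |].
    pose proof (rad_lipschitz x y); split_Rabs; lra.
Qed.

End Radial.

Lemma radial_inv a b h h' x : (a < n)%nat -> (b < n)%nat -> unit_homeo h h' ->
  radial a b h' (radial a b h x) = x.
Proof.
  intros Ha Hb Hh; pose proof (unit_homeo_sym h h' Hh) as Hh'; pose proof (rad_range x).
  assert (Rad : rad (radial a b h' (radial a b h x)) = rad x)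
    by (rewrite (rad_radial a b h' h), (rad_radial a b h h'); auto; apply Hh; lra).
  apply star_eq; auto; rewrite Rad; intro Hpos.
  assert (0 < rad (radial a b h x))
    by (rewrite (rad_radial a b h h') by auto; apply (unit_homeo_pos h h'); auto; lra).
  rewrite (arm_radial a b h' h), (arm_radial a b h h'), swap_involutive; auto.
Qed.

Lemma is_homeo_radial a b h h' : (a < n)%nat -> (b < n)%nat -> unit_homeo h h' ->
  is_homeo (radial a b h).
Proof.
  intros Ha Hb Hh; split; [now apply (radial_continuous a b h h') |].
  exists (radial a b h'); split; [apply (radial_continuous a b h' h); auto using unit_homeo_sym |].
  split; intro x; [now apply radial_inv | apply (radial_inv a b h' h); auto using unit_homeo_sym].
Qed.

Theorem radial_height (lam : R -> nat) k : (0 < n)%nat ->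
  lam 0 = 0%nat -> (forall t, 0 < t <= 1 -> lam t <> 0%nat) ->
  (forall t, 0 <= t <= 1 -> (lam t <= k)%nat) ->
  (forall j, (j <= k)%nat -> exists t, 0 <= t <= 1 /\ lam t = j) ->
  (forall t, 0 <= t <= 1 -> exists e, 0 < e /\
     forall s, 0 <= s <= 1 -> Rabs (s - t) < e -> (lam t <= lam s)%nat) ->
  (forall s t, 0 < s <= 1 -> 0 < t <= 1 -> lam s = lam t -> moves lam s t) ->
  P_h n (Fin k).
Proof.
  intros Hn Hlam0 Hlam_pos Hle Honto Hlsc Hmoves.
  exists (level_preserving (fun x => lam (rad x))).
  split; [apply level_preserving_subgroup | apply level_height].
  - intro x; apply Hle, rad_range.
  - intros j Hj; destruct (Honto j Hj) as [t [Ht E]].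
    exists (point 0 t); now rewrite rad_point.
  - intro x; destruct (Hlsc (rad x) (rad_range x)) as [e [He H]].
    exists e; split; auto; intros y Hy; apply H; [apply rad_range |].
    pose proof (rad_lipschitz x y); split_Rabs; lra.
  - intros x y E; pose proof (rad_range x); pose proof (rad_range y).
    destruct (Req_dec (rad x) 0) as [Hx | Hx].
    + assert (Hy : rad y = 0).
      { destruct (Req_dec (rad y) 0); auto; exfalso; apply (Hlam_pos (rad y)); [lra |].
        now rewrite <- E, Hx. }
      exists (fun z => z); split; [split; [apply is_homeo_id | auto] |].
      now rewrite (rad_eq0 x Hx), (rad_eq0 y Hy).
    + assert (Hy : rad y <> 0) by (intro Hy; apply (Hlam_pos (rad x)); [lra | now rewrite E, Hy]).
      destruct (Hmoves (rad x) (rad y)) as [h [h' [Hh [Hpres Ehx]]]]; try lra; auto.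
      assert (Hax : (arm x < n)%nat) by (apply arm_lt; lra).
      assert (Hay : (arm y < n)%nat) by (apply arm_lt; lra).
      exists (radial (arm x) (arm y) h); split; [split |].
      * now apply (is_homeo_radial _ _ h h').
      * intro z; rewrite (rad_radial _ _ h h') by auto; apply Hpres, rad_range.
      * apply star_eq; rewrite (rad_radial _ _ h h'); auto; intros _.
        rewrite (arm_radial _ _ h h') by (auto; lra); apply swap_l.
Qed.

End StarGeometry.

(** * Rescaling the odds on an interval *)

Definition odds (a c t : R) : R := (t - a) / (c - t).
Definition odds_inv (a c u : R) : R := (a + c * u) / (1 + u).

Definition scale_odds (a c l t : R) : R :=
  if Rlt_dec a t then if Rlt_dec t c then odds_inv a c (l * odds a c t) else t else t.

Section Odds.

Variables a c : R.
Hypothesis Hac : a < c.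

Lemma odds_pos t : a < t < c -> 0 < odds a c t.
Proof. intro; apply Rdiv_lt_0_compat; lra. Qed.

Lemma odds_inv_range u : 0 < u -> a < odds_inv a c u < c.
Proof.
  intro Hu; unfold odds_inv; split.
  - apply (Rmult_lt_reg_r (1 + u)); [lra |]; unfold Rdiv; rewrite Rmult_assoc, Rinv_l; nra.
  - apply (Rmult_lt_reg_r (1 + u)); [lra |]; unfold Rdiv; rewrite Rmult_assoc, Rinv_l; nra.
Qed.

Lemma odds_odds_inv u : 0 < u -> odds a c (odds_inv a c u) = u.
Proof. intro; unfold odds, odds_inv; field; split; nra. Qed.

Lemma odds_inv_odds t : a < t < c -> odds_inv a c (odds a c t) = t.
Proof. intro; unfold odds, odds_inv; field; lra. Qed.

Lemma odds_lt s t : a < s -> s < t -> t < c -> odds a c s < odds a c t.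
Proof.
  intros; unfold odds.
  replace ((s - a) / (c - s)) with ((c - a) * / (c - s) - 1) by (field; lra).
  replace ((t - a) / (c - t)) with ((c - a) * / (c - t) - 1) by (field; lra).
  apply Rplus_lt_compat_r, Rmult_lt_compat_l; [lra |].
  apply Rinv_lt_contravar; nra.
Qed.

Lemma odds_lt_iff s t : a < s < c -> a < t < c -> (odds a c s < odds a c t <-> s < t).
Proof.
  intros Hs Ht; split; [| intro; apply odds_lt; lra].
  intro Hlt; destruct (Rlt_le_dec s t) as [| [Hts | <-]]; auto; [| lra].
  pose proof (odds_lt t s ltac:(lra) Hts ltac:(lra)); lra.
Qed.

Lemma odds_inj s t : a < s < c -> a < t < c -> odds a c s = odds a c t -> s = t.
Proof.
  intros Hs Ht E; destruct (Rtotal_order s t) as [Hlt | [| Hlt]]; auto;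
    [apply (odds_lt_iff s t) in Hlt | apply (odds_lt_iff t s) in Hlt]; auto; lra.
Qed.

Lemma between_odds_inv x y t : 0 < x -> 0 < y -> a < t < c ->
  (odds_inv a c x < t < odds_inv a c y <-> x < odds a c t < y).
Proof.
  intros Hx Hy Ht; pose proof (odds_inv_range x Hx); pose proof (odds_inv_range y Hy).
  rewrite <- (odds_odds_inv x) at 2 by auto; rewrite <- (odds_odds_inv y) at 2 by auto.
  rewrite !odds_lt_iff by auto; tauto.
Qed.

Variable l : R.
Hypothesis Hl : 0 < l.

Lemma scale_odds_out t : ~ (a < t < c) -> scale_odds a c l t = t.
Proof. intro Ht; unfold scale_odds; repeat destruct Rlt_dec; auto; tauto. Qed.

Lemma scale_odds_in t : a < t < c ->
  a < scale_odds a c l t < c /\ odds a c (scale_odds a c l t) = l * odds a c t.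
Proof.
  intro Ht; unfold scale_odds; repeat destruct Rlt_dec; try lra.
  pose proof (odds_pos t Ht).
  split; [apply odds_inv_range | apply odds_odds_inv]; nra.
Qed.

Lemma scale_odds_incr s t : s < t -> scale_odds a c l s < scale_odds a c l t.
Proof.
  intro Hst; assert (In : forall u, a < u < c -> a < scale_odds a c l u < c)
    by (intros; now apply scale_odds_in).
  destruct (Rlt_dec a s) as [Has | Has]; [destruct (Rlt_dec s c) as [Hsc | Hsc] |].
  - pose proof (In s (conj Has Hsc)).
    destruct (Rlt_dec t c) as [Htc | Htc]; [| rewrite (scale_odds_out t) by lra; lra].
    rewrite <- (odds_lt_iff (scale_odds a c l s) (scale_odds a c l t)) by (auto; apply In; lra).
    rewrite (proj2 (scale_odds_in s ltac:(lra))), (proj2 (scale_odds_in t ltac:(lra))).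
    apply Rmult_lt_compat_l; auto; apply odds_lt_iff; lra.
  - rewrite !scale_odds_out by lra; lra.
  - rewrite (scale_odds_out s) by lra.
    destruct (Rlt_dec a t), (Rlt_dec t c);
      [pose proof (In t ltac:(lra)); lra | rewrite scale_odds_out by lra; lra ..].
Qed.

Lemma scale_odds_inv t : scale_odds a c (/ l) (scale_odds a c l t) = t.
Proof.
  destruct (Rlt_dec a t), (Rlt_dec t c);
    [| unfold scale_odds; repeat destruct Rlt_dec; try lra; reflexivity ..].
  destruct (scale_odds_in t ltac:(lra)) as [Hin E].
  unfold scale_odds at 1; repeat destruct Rlt_dec; try lra.
  rewrite E, <- Rmult_assoc, Rinv_l, Rmult_1_l by lra; apply odds_inv_odds; lra.
Qed.

End Odds.

Lemma unit_homeo_scale_odds a c l : 0 <= a -> a < c -> c <= 1 -> 0 < l ->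
  unit_homeo (scale_odds a c l) (scale_odds a c (/ l)).
Proof.
  intros Ha Hac Hc Hl; assert (Hl' : 0 < / l) by now apply Rinv_0_lt_compat.
  assert (Range : forall m t, 0 < m -> 0 <= t <= 1 -> 0 <= scale_odds a c m t <= 1).
  { intros m t Hm Ht; destruct (Rlt_dec a t), (Rlt_dec t c);
      [pose proof (scale_odds_in a c Hac m Hm t ltac:(lra)); lra |
       rewrite scale_odds_out; auto; lra ..]. }
  repeat split; intros; try (apply Range; auto).
  - now apply scale_odds_inv.
  - rewrite <- (Rinv_inv l) at 1; now apply scale_odds_inv.
  - now apply scale_odds_incr.
Qed.

Lemma scale_odds_to a c s t : a < c -> a < s < c -> a < t < c ->
  scale_odds a c (odds a c t / odds a c s) s = t.
Proof.
  intros Hac Hs Ht; pose proof (odds_pos a c s Hs); pose proof (odds_pos a c t Ht).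
  assert (Hl : 0 < odds a c t / odds a c s) by now apply Rdiv_lt_0_compat.
  destruct (scale_odds_in a c Hac _ Hl s Hs) as [Hin E].
  apply (odds_inj a c); auto; rewrite E; field; lra.
Qed.

Lemma moves_in_interval (lam : R -> nat) a c s t : 0 <= a -> a < c -> c <= 1 ->
  (forall u v, a < u < c -> a < v < c -> lam u = lam v) ->
  a < s < c -> a < t < c -> moves lam s t.
Proof.
  intros Ha Hac Hc Hconst Hs Ht; pose proof (odds_pos a c s Hs); pose proof (odds_pos a c t Ht).
  assert (Hl : 0 < odds a c t / odds a c s) by now apply Rdiv_lt_0_compat.
  exists (scale_odds a c (odds a c t / odds a c s)), (scale_odds a c (/ (odds a c t / odds a c s))).
  split; [now apply unit_homeo_scale_odds | split; [| now apply scale_odds_to]].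
  intros u Hu; destruct (Rlt_dec a u), (Rlt_dec u c);
    [| rewrite scale_odds_out; auto; lra ..].
  apply Hconst; auto; now apply scale_odds_in.
Qed.

(** * Level functions realising every finite height k >= 2 *)

Definition pow2 (z : Z) : R := Rpower 2 (IZR z).

Lemma pow2_pos z : 0 < pow2 z.
Proof. apply exp_pos. Qed.

Lemma pow2_add z z' : pow2 (z + z') = pow2 z * pow2 z'.
Proof. unfold pow2; rewrite plus_IZR; apply Rpower_plus. Qed.

Lemma pow2_lt_iff z z' : pow2 z < pow2 z' <-> (z < z')%Z.
Proof.
  split; intro H; [| apply Rpower_lt, IZR_lt; auto; lra].
  destruct (Z_lt_le_dec z z') as [| Hle]; auto; exfalso.
  apply IZR_le, (Rle_Rpower 2) in Hle; [unfold pow2 in H; lra | lra].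
Qed.

Lemma pow2_floor u : 0 < u -> exists z, pow2 z <= u < pow2 (z + 1).
Proof.
  intro Hu; assert (L2 : 0 < ln 2) by (rewrite <- ln_1; apply ln_increasing; lra).
  set (x := ln u / ln 2).
  assert (Ex : Rpower 2 x = u).
  { unfold Rpower, x; replace (ln u / ln 2 * ln 2) with (ln u) by (field; lra).
    now apply exp_ln. }
  destruct (archimed x) as [A1 A2]; exists (up x - 1)%Z; unfold pow2.
  rewrite minus_IZR; replace (up x - 1 + 1)%Z with (up x) by ring; rewrite <- Ex; split.
  - apply Rle_Rpower; lra.
  - apply Rpower_lt; lra.
Qed.

Lemma three_not_pow2 z : pow2 z <> 3.
Proof.
  intro E; assert (H1 : pow2 1 = 2) by (apply Rpower_1; lra).
  assert (pow2 2 = 4) by (replace 2%Z with (1 + 1)%Z by ring; rewrite pow2_add, H1; lra).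
  assert (1 < z < 2)%Z by (split; apply pow2_lt_iff; lra); lia.
Qed.

Definition dyadic (N : nat) (t : R) : Prop :=
  0 < t < 1 / INR N /\ exists z, odds 0 (1 / INR N) t = pow2 z.

Section Dyadic.

Variable N : nat.
Hypothesis HN : (1 <= N)%nat.

Let p_pos : 0 < 1 / INR N.
Proof. apply Rdiv_lt_0_compat; [lra | apply lt_0_INR; lia]. Qed.

Lemma dyadic_gap t : 0 < t < 1 / INR N -> ~ dyadic N t -> exists z,
  odds_inv 0 (1 / INR N) (pow2 z) < t < odds_inv 0 (1 / INR N) (pow2 (z + 1)).
Proof.
  intros Ht Hnd; destruct (pow2_floor (odds 0 (1 / INR N) t)) as [z [[Hlt | Heq] Hup]];
    [now apply odds_pos | | now elim Hnd; split; [| exists z] ].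
  exists z; apply between_odds_inv; auto using pow2_pos.
Qed.

Lemma gap_not_dyadic z s :
  odds_inv 0 (1 / INR N) (pow2 z) < s < odds_inv 0 (1 / INR N) (pow2 (z + 1)) ->
  0 < s < 1 / INR N /\ ~ dyadic N s.
Proof.
  intro Hs; pose proof (odds_inv_range 0 (1 / INR N) p_pos (pow2 z) (pow2_pos z)).
  pose proof (odds_inv_range 0 (1 / INR N) p_pos (pow2 (z + 1)) (pow2_pos (z + 1))).
  assert (Hs' : 0 < s < 1 / INR N) by lra; split; auto.
  intros [_ [z' E]]; apply between_odds_inv in Hs; auto using pow2_pos.
  rewrite E, !pow2_lt_iff in Hs; lia.
Qed.

Lemma dyadic_scale w t : 0 < t < 1 / INR N ->
  (dyadic N (scale_odds 0 (1 / INR N) (pow2 w) t) <-> dyadic N t).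
Proof.
  intro Ht; destruct (scale_odds_in 0 (1 / INR N) p_pos (pow2 w) (pow2_pos w) t Ht) as [Hin E].
  unfold dyadic; rewrite E; split; intros [_ [z Ez]]; split; auto.
  - exists (z - w)%Z; apply (Rmult_eq_reg_l (pow2 w)); [| apply Rgt_not_eq, pow2_pos].
    now rewrite Ez, <- pow2_add; f_equal; ring.
  - exists (w + z)%Z; now rewrite Ez, pow2_add.
Qed.

End Dyadic.

Lemma div_lt_iff x y M : 0 < M -> (x / M < y <-> x < y * M).
Proof.
  intro HM; replace x with (x / M * M) at 2 by (field; lra).
  split; intro H; [now apply Rmult_lt_compat_r | now apply Rmult_lt_reg_r in H].
Qed.

Lemma lt_div_iff x y M : 0 < M -> (y < x / M <-> y * M < x).
Proof.
  intro HM; replace x with (x / M * M) at 2 by (field; lra).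
  split; intro H; [now apply Rmult_lt_compat_r | now apply Rmult_lt_reg_r in H].
Qed.

Definition cell (N : nat) (t : R) : nat := Z.to_nat (up (t * INR N)).

Lemma cell_unique N t c : INR c - 1 <= t * INR N < INR c -> cell N t = c.
Proof.
  intro Hc; unfold cell; rewrite INR_IZR_INZ in Hc.
  rewrite <- (tech_up (t * INR N) (Z.of_nat c)); [apply Nat2Z.id | lra | lra].
Qed.

Lemma cell_spec N t : 0 <= t * INR N -> INR (cell N t) - 1 <= t * INR N < INR (cell N t).
Proof.
  intro Ht; destruct (archimed (t * INR N)) as [A1 A2].
  assert (Hpos : (0 <= up (t * INR N))%Z) by (apply le_IZR; lra).
  unfold cell; rewrite INR_IZR_INZ, Z2Nat.id by auto; lra.
Qed.

(* For k = 2N + b: the radius g/N gets level g (the centre gets 0), the dyadic radii (only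
   when b = true) get level N + 1, and the other radii of the cell ((l-1)/N, l/N) get level
   N + b + l.  Here [cell N t] is floor (N t) + 1. *)
Definition level (N : nat) (b : bool) (t : R) : nat :=
  if Req_EM_T (t * INR N) (INR (cell N t) - 1) then Nat.pred (cell N t)
  else if excluded_middle_informative (b = true /\ dyadic N t) then S N
  else (N + Nat.b2n b + cell N t)%nat.

Lemma nat_close g g' : Rabs (INR g - INR g') < 1 -> g = g'.
Proof.
  intro H; destruct (Nat.lt_trichotomy g g') as [Hlt | [| Hlt]]; auto; exfalso;
    apply le_INR in Hlt; rewrite S_INR in Hlt; split_Rabs; lra.
Qed.

Section Level.

Variables (N : nat) (b : bool).
Hypothesis HN : (1 <= N)%nat.

Let N_pos : 0 < INR N.
Proof. apply lt_0_INR; lia. Qed.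

Let p_pos : 0 < 1 / INR N.
Proof. apply Rdiv_lt_0_compat; lra. Qed.

Let p_le1 : 1 / INR N <= 1.
Proof.
  apply (Rmult_le_reg_r (INR N)); auto; unfold Rdiv; rewrite Rmult_1_l, Rinv_l by lra.
  apply (le_INR 1) in HN; simpl in HN; lra.
Qed.

Lemma div_N_lt x y : x < y -> x / INR N < y / INR N.
Proof. intro; apply Rmult_lt_compat_r; auto; now apply Rinv_0_lt_compat. Qed.

Lemma div_N_le x y : x <= y -> x / INR N <= y / INR N.
Proof. intro; apply Rmult_le_compat_r; auto; left; now apply Rinv_0_lt_compat. Qed.

Lemma level_grid g t : t = INR g / INR N -> level N b t = g.
Proof.
  intro Ht; assert (Hu : t * INR N = INR g) by (rewrite Ht; field; lra).
  assert (Hc : cell N t = S g) by (apply cell_unique; rewrite S_INR; lra).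
  unfold level; rewrite Hc; destruct Req_EM_T as [| Hne]; auto.
  rewrite S_INR in Hne; lra.
Qed.

Lemma level_dyadic t : b = true -> dyadic N t -> level N b t = S N.
Proof.
  intros Hb Hd; pose proof Hd as [[Ht0 Ht1] _].
  apply lt_div_iff in Ht1; auto.
  assert (Hc : cell N t = 1%nat) by (apply cell_unique; simpl; nra).
  unfold level; rewrite Hc; destruct Req_EM_T as [E | _]; [simpl in E; nra |].
  destruct excluded_middle_informative; tauto.
Qed.

Lemma level_open l t : (INR l - 1) / INR N < t < INR l / INR N ->
  ~ (b = true /\ dyadic N t) -> level N b t = (N + Nat.b2n b + l)%nat.
Proof.
  intros [Hlo Hhi] Hnd; apply div_lt_iff in Hlo; apply lt_div_iff in Hhi; auto.
  assert (Hc : cell N t = l) by (apply cell_unique; lra).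
  unfold level; rewrite Hc; destruct Req_EM_T; [lra |].
  destruct excluded_middle_informative; tauto.
Qed.

Inductive level_spec (t : R) : nat -> Prop :=
  | LevelGrid g : (g <= N)%nat -> t = INR g / INR N -> level_spec t g
  | LevelDyadic : b = true -> dyadic N t -> level_spec t (S N)
  | LevelOpen l : (1 <= l <= N)%nat -> (INR l - 1) / INR N < t < INR l / INR N ->
      ~ (b = true /\ dyadic N t) -> level_spec t (N + Nat.b2n b + l).

Lemma levelP t : 0 <= t <= 1 -> level_spec t (level N b t).
Proof.
  intro Ht; assert (Hu : 0 <= t * INR N <= INR N) by nra.
  pose proof (cell_spec N t ltac:(lra)) as Hc; set (c := cell N t) in *.
  assert (Hc1 : (1 <= c)%nat) by (apply (INR_lt 0); simpl; lra).
  assert (HcN : (c <= S N)%nat) by (apply INR_le; rewrite S_INR; lra).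
  destruct (Req_dec (t * INR N) (INR c - 1)) as [E | Ne].
  - assert (Eg : INR (Nat.pred c) = INR c - 1)
      by (rewrite <- (Nat.succ_pred_pos c) at 2 by lia; rewrite S_INR; ring).
    rewrite (level_grid (Nat.pred c)) by (rewrite Eg, <- E; field; lra).
    apply LevelGrid; [apply INR_le; lra | rewrite Eg, <- E; field; lra].
  - assert (Hcell : (INR c - 1) / INR N < t < INR c / INR N)
      by (rewrite div_lt_iff, lt_div_iff by auto; lra).
    destruct (excluded_middle_informative (b = true /\ dyadic N t)) as [[Hb Hd] | Hnd].
    + rewrite level_dyadic by auto; now apply LevelDyadic.
    + rewrite (level_open c) by auto; apply LevelOpen; auto.
      split; auto; destruct (le_lt_eq_dec c (S N) HcN) as [| ->]; [lia |].
      rewrite S_INR in *; lra.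
Qed.

Lemma level_first_cell u v : 0 < u < 1 / INR N -> 0 < v < 1 / INR N ->
  (dyadic N u <-> dyadic N v) -> level N b u = level N b v.
Proof.
  intros Hu Hv Huv.
  assert (Cell1 : forall w, 0 < w < 1 / INR N -> (INR 1 - 1) / INR N < w < INR 1 / INR N)
    by (intros; simpl; unfold Rdiv; rewrite Rminus_diag, Rmult_0_l; lra).
  destruct (excluded_middle_informative (b = true /\ dyadic N u)) as [[Hb Hd] | Hnd].
  - rewrite !level_dyadic; tauto.
  - rewrite !(level_open 1); auto; tauto.
Qed.

(* Multiplying the odds on the first cell by a power of 2 permutes the dyadic radii. *)
Lemma moves_first_cell s t w : 0 < s < 1 / INR N -> 0 < t < 1 / INR N ->
  odds 0 (1 / INR N) t = pow2 w * odds 0 (1 / INR N) s -> moves (level N b) s t.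
Proof.
  intros Hs Ht E; pose proof (pow2_pos w) as Hw.
  exists (scale_odds 0 (1 / INR N) (pow2 w)), (scale_odds 0 (1 / INR N) (/ pow2 w)).
  split; [apply unit_homeo_scale_odds; auto; lra | split].
  - intros u Hu; destruct (Rlt_dec 0 u), (Rlt_dec u (1 / INR N));
      [| rewrite scale_odds_out; auto; lra ..].
    apply level_first_cell; [now apply scale_odds_in | lra | now apply dyadic_scale].
  - destruct (scale_odds_in 0 (1 / INR N) p_pos (pow2 w) Hw s Hs) as [Hin Es].
    apply (odds_inj 0 (1 / INR N)); auto; now rewrite Es, E.
Qed.

Lemma level_zero : level N b 0 = 0%nat.
Proof. apply level_grid; simpl; unfold Rdiv; ring. Qed.

Lemma level_pos t : 0 < t <= 1 -> level N b t <> 0%nat.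
Proof.
  intro Ht; destruct (levelP t ltac:(lra)) as [g Hg Eg | | l Hl _ _]; try lia.
  intros ->; simpl in Eg; unfold Rdiv in Eg; lra.
Qed.

Lemma level_le t : 0 <= t <= 1 -> (level N b t <= 2 * N + Nat.b2n b)%nat.
Proof.
  intro Ht; destruct (levelP t Ht) as [g Hg _ | Hb _ | l Hl _ _];
    [lia | rewrite Hb; simpl; lia | lia].
Qed.

Lemma level_onto j : (j <= 2 * N + Nat.b2n b)%nat -> exists t, 0 <= t <= 1 /\ level N b t = j.
Proof.
  intro Hj; assert (Frac : forall x, 0 <= x <= INR N -> 0 <= x / INR N <= 1).
  { intros x Hx; split; [apply Rmult_le_pos; [lra | left; now apply Rinv_0_lt_compat] |].
    apply (Rmult_le_reg_r (INR N)); auto; unfold Rdiv; rewrite Rmult_assoc, Rinv_l; lra. }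
  destruct (le_lt_dec j N) as [HjN | HjN].
  { exists (INR j / INR N); split; [apply Frac; split; [apply pos_INR | now apply le_INR] |].
    now apply level_grid. }
  destruct (excluded_middle_informative (b = true /\ j = S N)) as [[Hb ->] | Hnot].
  - exists (/ 2 / INR N); split; [apply Frac; apply (le_INR 1) in HN; simpl in *; lra |].
    apply level_dyadic; auto; split.
    + split; [apply Rdiv_lt_0_compat; lra | apply div_N_lt; lra].
    + exists 0%Z; unfold odds, pow2; rewrite Rpower_O by lra; field; lra.
  - set (l := (j - N - Nat.b2n b)%nat).
    assert (Hl : (1 <= l <= N)%nat /\ j = (N + Nat.b2n b + l)%nat)
      by (unfold l; destruct b; simpl in *; [assert (j <> S N) by tauto |]; lia).
    destruct Hl as [Hl Ej]; rewrite Ej.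
    assert (HlN : 1 <= INR l <= INR N) by (split; [apply (le_INR 1) | apply le_INR]; lia).
    exists ((INR l - / 4) / INR N); split; [apply Frac; lra |].
    apply level_open; [split; apply div_N_lt; lra |].
    intros [_ [[_ Hsmall] [z Ez]]].
    destruct (Nat.eq_dec l 1) as [El | Nl].
    + apply (three_not_pow2 z); rewrite <- Ez; unfold odds; rewrite El; simpl; field; lra.
    + assert (2 <= INR l) by (apply (le_INR 2); lia).
      pose proof (div_N_lt 1 (INR l - / 4) ltac:(lra)); lra.
Qed.

Lemma not_dyadic_nbhd t : 0 < t -> t <> 1 / INR N -> ~ (b = true /\ dyadic N t) ->
  exists e, 0 < e /\ forall s, Rabs (s - t) < e -> ~ (b = true /\ dyadic N s).
Proof.
  intros Ht Htp Hnd; destruct (Rlt_le_dec t (1 / INR N)) as [Hlt | Hge].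
  - destruct (excluded_middle_informative (b = true)) as [Hb | Hb];
      [| exists 1; split; [lra | tauto]].
    destruct (dyadic_gap N HN t ltac:(lra) ltac:(tauto)) as [z Hz].
    set (A := odds_inv 0 (1 / INR N) (pow2 z)) in *;
      set (C := odds_inv 0 (1 / INR N) (pow2 (z + 1))) in *.
    exists (Rmin (t - A) (C - t)); split; [apply Rmin_glb_lt; lra |]; intros s Hs [_ Hd].
    assert (Hs' : A < s < C)
      by (pose proof (Rmin_l (t - A) (C - t)); pose proof (Rmin_r (t - A) (C - t));
          split_Rabs; lra).
    now apply (gap_not_dyadic N HN z s Hs').
  - exists (t - 1 / INR N); split; [lra |]; intros s Hs [_ [[_ Hsp] _]]; split_Rabs; lra.
Qed.

Lemma level_lsc t : 0 <= t <= 1 -> exists e, 0 < e /\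
  forall s, 0 <= s <= 1 -> Rabs (s - t) < e -> (level N b t <= level N b s)%nat.
Proof.
  intro Ht; destruct (levelP t Ht) as [g Hg Et | Hb Hd | l Hl Hcell Hnd].
  - exists (1 / INR N); split; auto; intros s Hs Hst.
    destruct (levelP s Hs) as [g' Hg' Es | | ]; [| lia | lia].
    enough (g' = g) by lia.
    apply nat_close; rewrite Es, Et in Hst.
    replace (INR g' / INR N - INR g / INR N) with ((INR g' - INR g) * (1 / INR N)) in Hst
      by (field; lra).
    rewrite Rabs_mult, (Rabs_right (1 / INR N)) in Hst by lra.
    rewrite <- (Rmult_1_l (1 / INR N)) in Hst at 2; now apply Rmult_lt_reg_r in Hst.
  - pose proof Hd as [Htp _]; exists (Rmin t (1 / INR N - t)); split; [apply Rmin_glb_lt; lra |].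
    intros s Hs Hst; pose proof (Rmin_l t (1 / INR N - t)); pose proof (Rmin_r t (1 / INR N - t)).
    assert (Hsp : 0 < s < 1 / INR N) by (split_Rabs; lra).
    destruct (levelP s Hs) as [g' Hg' Es | | ]; [| lia | rewrite Hb; simpl; lia].
    exfalso; destruct g' as [| g']; [simpl in Es; unfold Rdiv in Es; lra |].
    assert (Hs1 : s * INR N < 1) by (apply lt_div_iff; lra).
    rewrite Es in Hs1.
    replace (INR (S g') / INR N * INR N) with (INR (S g')) in Hs1 by (field; lra).
    rewrite S_INR in Hs1; pose proof (pos_INR g'); lra.
  - assert (Hl1 : 1 <= INR l) by (apply (le_INR 1); lia).
    assert (Hlo : 0 <= (INR l - 1) / INR N)
      by (apply Rmult_le_pos; [lra | left; now apply Rinv_0_lt_compat]).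
    assert (Htp : t <> 1 / INR N).
    { intro E; destruct (Nat.eq_dec l 1) as [-> | Hne1].
      - simpl in Hcell; lra.
      - assert (2 <= INR l) by (apply (le_INR 2); lia).
        pose proof (div_N_le 1 (INR l - 1) ltac:(lra)); lra. }
    destruct (not_dyadic_nbhd t ltac:(lra) Htp Hnd) as [e [He Hne]].
    set (lo := t - (INR l - 1) / INR N); set (hi := INR l / INR N - t).
    exists (Rmin e (Rmin lo hi)).
    split; [apply Rmin_glb_lt; auto; apply Rmin_glb_lt; unfold lo, hi; lra |].
    intros s Hs Hst; pose proof (Rmin_l e (Rmin lo hi)); pose proof (Rmin_r e (Rmin lo hi));
      pose proof (Rmin_l lo hi); pose proof (Rmin_r lo hi); unfold lo, hi in *.
    rewrite (level_open l s); auto; [split_Rabs; lra | apply Hne; lra].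
Qed.

Lemma gap_moves s t : b = true -> 0 < s < 1 / INR N -> 0 < t < 1 / INR N ->
  ~ dyadic N s -> ~ dyadic N t -> moves (level N b) s t.
Proof.
  intros Hb Hs Ht Hns Hnt.
  destruct (dyadic_gap N HN s Hs Hns) as [z Hz], (dyadic_gap N HN t Ht Hnt) as [z' Hz'].
  set (w := (z' - z)%Z); set (A := odds_inv 0 (1 / INR N) (pow2 z'));
    set (C := odds_inv 0 (1 / INR N) (pow2 (z' + 1))).
  destruct (scale_odds_in 0 (1 / INR N) p_pos (pow2 w) (pow2_pos w) s Hs) as [Hs1 Es1].
  set (s1 := scale_odds 0 (1 / INR N) (pow2 w) s) in *.
  assert (Hgap : A < s1 < C).
  { apply between_odds_inv in Hz; auto using pow2_pos.
    apply between_odds_inv; auto using pow2_pos; rewrite Es1.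
    replace z' with (w + z)%Z by (unfold w; ring).
    replace (w + z + 1)%Z with (w + (z + 1))%Z by ring.
    rewrite (pow2_add w z), (pow2_add w (z + 1)); pose proof (pow2_pos w).
    split; apply Rmult_lt_compat_l; lra. }
  apply (moves_trans _ s s1 t); [now apply (moves_first_cell s s1 w) |].
  apply (moves_in_interval _ A C); auto; try lra.
  - pose proof (odds_inv_range 0 (1 / INR N) p_pos (pow2 z') (pow2_pos z')) as HA.
    fold A in HA; lra.
  - pose proof (odds_inv_range 0 (1 / INR N) p_pos (pow2 (z' + 1)) (pow2_pos (z' + 1))) as HC;
      fold C in HC; lra.
  - intros u v Hu Hv; destruct (gap_not_dyadic N HN z' u Hu), (gap_not_dyadic N HN z' v Hv).
    apply level_first_cell; tauto.
Qed.

Lemma open_moves l s t : (1 <= l <= N)%nat ->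
  (INR l - 1) / INR N < s < INR l / INR N -> (INR l - 1) / INR N < t < INR l / INR N ->
  ~ (b = true /\ dyadic N s) -> ~ (b = true /\ dyadic N t) -> moves (level N b) s t.
Proof.
  intros Hl Hs Ht Hns Hnt.
  assert (Hl1 : 1 <= INR l <= INR N) by (split; [apply (le_INR 1) | apply le_INR]; lia).
  destruct (excluded_middle_informative (b = true /\ l = 1%nat)) as [[Hb ->] | Hgen].
  - simpl in Hs, Ht; unfold Rdiv in Hs, Ht; rewrite Rminus_diag, Rmult_0_l in Hs, Ht.
    apply gap_moves; auto; tauto.
  - apply (moves_in_interval _ ((INR l - 1) / INR N) (INR l / INR N)); auto.
    + apply Rmult_le_pos; [lra | left; now apply Rinv_0_lt_compat].
    + apply div_N_lt; lra.
    + apply (Rle_trans _ (INR N / INR N)); [now apply div_N_le | unfold Rdiv; rewrite Rinv_r; lra].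
    + assert (Far : forall u, (INR l - 1) / INR N < u -> ~ (b = true /\ dyadic N u)).
      { intros u Hu [Hb [[_ Hup] _]]; assert (l <> 1%nat) by tauto.
        assert (2 <= INR l) by (apply (le_INR 2); lia).
        pose proof (div_N_le 1 (INR l - 1) ltac:(lra)); lra. }
      intros u v Hu Hv; rewrite !(level_open l); auto; apply Far; lra.
Qed.

Lemma level_moves s t : 0 < s <= 1 -> 0 < t <= 1 -> level N b s = level N b t ->
  moves (level N b) s t.
Proof.
  intros Hs Ht; destruct (levelP s ltac:(lra)) as [g Hg Es | Hb [Hs1 [z Ez]] | l Hl Hcs Hns],
    (levelP t ltac:(lra)) as [g' Hg' Et | Hb' [Ht1 [z' Ez']] | l' Hl' Hct Hnt];
    intro E; try lia; try (rewrite Hb in E || rewrite Hb' in E; simpl in E; lia).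
  - subst g'; rewrite <- Et in Es; subst s; apply moves_refl.
  - apply (moves_first_cell s t (z' - z)); auto.
    now rewrite Ez, Ez', <- pow2_add; f_equal; ring.
  - assert (l' = l) as -> by lia; now apply (open_moves l).
Qed.

End Level.

Theorem P_h_fin n k : (0 < n)%nat -> (2 <= k)%nat -> P_h n (Fin k).
Proof.
  intros Hn Hk; rewrite (Nat.div2_odd k) in *.
  set (N := Nat.div2 k) in *; set (b := Nat.odd k) in *.
  assert (HN : (1 <= N)%nat) by (destruct b; simpl in Hk; lia).
  apply (radial_height n (level N b)); auto.
  - apply level_zero; auto.
  - intros; now apply level_pos.
  - intros; now apply level_le.
  - intros; now apply level_onto.
  - intros; now apply level_lsc.
  - intros; now apply level_moves.
Qed.

Theorem theorem4p2 (n : nat) (hn : (3 <= n)%nat) (h : natinf) :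
  P_h n h <-> (h = Inf \/ exists k, h = Fin k /\ (2 <= k)%nat).
Proof.
  split.
  - intros [G [HG Hh]]; destruct h as [k |]; [right | now left].
    exists k; split; auto; now apply (height_ge2 n G).
  - intros [-> | [k [-> Hk]]].
    + exists (trivial_group n); split; [apply trivial_subgroup | apply trivial_group_height; lia].
    + apply P_h_fin; lia.
Qed.
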